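(* Under the hypotheses of the average consensus error bound (SGP with Assumptions (1)–(4), the almost-sure bound $\|\bar{x}^{(t)}-z_i^{(t)}\|\le Cq^tX_0+\eta C\sum_{s=0}^tq^{t-s}\max_j\|g_j(z_j^{(s)};\xi_j^{(s)})\|$ for all $t\ge0$ and $i$ with $X_0=\max_m\|x_m^{(0)}\|$, and $P:=1-\frac{9\eta^2C^2L^2n}{(1-q)^2}>0$), assume moreover $0<\eta\le1/L$ and that for a given $T\ge1$ the cumulative inequality $$\frac{\eta}{2}\sum_{t=0}^{T-1}\mathbb{E}\|\nabla f(\bar{x}^{(t)})\|^2+\frac{\eta-L\eta^2}{2}\sum_{t=0}^{T-1}\mathbb{E}\Big\|\frac1n\sum_{i=1}^n\nabla f_i(z_i^{(t)})\Big\|^2\le f(\bar{x}^{(0)})-f^*+\frac{L\eta^2\sigma^2}{2n}T+\frac{\eta L^2}{2}\sum_{t=0}^{T-1}M^{(t)}$$ holds, where $M^{(t)}=\frac1n\sum_i\mathbb{E}\|\bar{x}^{(t)}-z_i^{(t)}\|^2$. Then $$\Big(1-\frac{9\eta^2L^2C^2}{P(1-q)^2}\Big)\sum_{t=0}^{T-1}\mathbb{E}\|\nabla f(\bar{x}^{(t)})\|^2\le\frac{2(f(\bar{x}^{(0)})-f^* )}{\eta}+\frac{L\eta\sigma^2T}{n}+\frac{3L^2C^2X_0^2}{P(1-q)^2}+\frac{3\eta^2L^2C^2n\sigma^2T}{P(1-q)^2}+\frac{9\eta^2L^2C^2n\zeta^2T}{P(1-q)^2}.$$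
   Context: Setting (SGP). Nodes $V=\{1,\dots,n\}$, $n\ge2$, base topology $G=(V,E)$ bidirected with self-loops; local objectives $f_i$, $f=\frac1n\sum_i f_i$, $f^*$ the finite optimal value of $f$; stochastic gradients $g_i(x;\xi)$ with fresh independent minibatches. SGP with nonnegative column-stochastic mixing matrices $W^{(t)}$ ($W^{(t)}_{ij}\ne0$ only if $(j,i)\in E$): $x_i^{(t+1)}=\sum_j W^{(t)}_{ij}(x_j^{(t)}-\eta g_j(z_j^{(t)};\xi_j^{(t)}))$, $w_i^{(t+1)}=\sum_jW^{(t)}_{ij}w_j^{(t)}$, $w_i^{(0)}=1$, $z_i^{(t)}=x_i^{(t)}/w_i^{(t)}$, $\bar{x}^{(t)}=\frac1n\sum_ix_i^{(t)}$. $E^{(t)}=\{(j,i)\in E:W^{(t)}_{ij}\ne0\}$, $\delta=\min_t\min_{W^{(t)}_{ij}>0}W^{(t)}_{ij}$. Assumptions: (1) each $f_i$ is $L$-smooth; (2) $\mathbb{E}\|g_i(x;\xi)-\nabla f_i(x)\|^2\le\sigma^2$ for all $i,x$; (3) $\frac1n\sum_i\|\nabla f_i(x)-\nabla f(x)\|^2\le\zeta^2$ for all $x$; (4) positive integers $B,\Delta$ exist with $(V,\bigcup_{t=lB}^{(l+1)B-1}E^{(t)})$ strongly connected of diameter at most $\Delta$ for every $l\in\mathbb{N}$. Constants: $C=4/\delta^{\Delta B}$ and $q=(1-\delta^{\Delta B})^{1/(\Delta B)}\in(0,1)$. *)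

From HB Require Import structures.
From mathcomp Require Import all_boot all_order all_algebra.
From mathcomp Require Import all_classical all_reals all_analysis.
Set Implicit Arguments. Unset Strict Implicit. Unset Printing Implicit Defensive.
Import Order.TTheory GRing.Theory Num.Theory.
Import numFieldNormedType.Exports.
Local Open Scope ring_scope.

Definition dotv {R : realType} {d : nat} (u v : 'rV[R]_d) : R :=
  \sum_(k < d) u ord0 k * v ord0 k.
Definition enorm {R : realType} {d : nat} (v : 'rV[R]_d) : R :=
  Num.sqrt (dotv v v).

Definition is_gradient {R : realType} {d : nat}
    (f : 'rV[R]_d -> R) (gf : 'rV[R]_d -> 'rV[R]_d) : Prop :=
  forall x, differentiable f x /\ forall h, ('d f x) h = dotv (gf x) h.

Definition L_smooth {R : realType} {d : nat} (L : R)
    (f : 'rV[R]_d -> R) (gf : 'rV[R]_d -> 'rV[R]_d) : Prop :=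
  is_gradient f gf /\ forall x y, enorm (gf x - gf y) <= L * enorm (x - y).

Definition diam_le {n : nat} (e : rel 'I_n) (k : nat) : Prop :=
  forall u v : 'I_n, exists p : seq 'I_n,
    [/\ path e u p, last u p = v & (size p <= k)%N].

(* union of the communication graphs E^(t) over the window [lB, (l+1)B):
   edge (j,i) present iff W^(t)_{ij} <> 0 for some t in the window *)
Definition window_rel {R : realType} {n : nat} (W : nat -> 'M[R]_n)
    (B l : nat) : rel 'I_n :=
  fun j i => [exists s : 'I_B, W (l * B + s)%N i j != 0].

(* The SGP iterates (x^(t), w^(t)) as a deterministic function of the
   realised minibatch path xiv : nat -> 'I_n -> Xi. *)
Fixpoint sgp_state {R : realType} {n d : nat} {Xi : Type}
    (W : nat -> 'M[R]_n) (g : 'I_n -> 'rV[R]_d -> Xi -> 'rV[R]_d)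
    (eta : R) (x0 : 'I_n -> 'rV[R]_d) (xiv : nat -> 'I_n -> Xi) (t : nat)
    : ('I_n -> 'rV[R]_d) * ('I_n -> R) :=
  match t with
  | 0 => (x0, fun _ => 1)
  | t'.+1 =>
      let st := sgp_state W g eta x0 xiv t' in
      let x := st.1 in let w := st.2 in
      let z := fun j => (w j)^-1 *: x j in
      (fun i => \sum_(j < n) W t' i j *: (x j - eta *: g j (z j) (xiv t' j)),
       fun i => \sum_(j < n) W t' i j * w j)
  end.

Section Random.
Context {R : realType} {n d : nat} {Xi : Type} {Omega : Type}.
Variables (W : nat -> 'M[R]_n) (g : 'I_n -> 'rV[R]_d -> Xi -> 'rV[R]_d)
  (eta : R) (x0 : 'I_n -> 'rV[R]_d) (xi : nat -> 'I_n -> Omega -> Xi).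

Definition path_of (om : Omega) : nat -> 'I_n -> Xi := fun s j => xi s j om.
Definition sgp_x t i om := (sgp_state W g eta x0 (path_of om) t).1 i.
Definition sgp_w t i om := (sgp_state W g eta x0 (path_of om) t).2 i.
Definition sgp_z t i om := (sgp_w t i om)^-1 *: sgp_x t i om.
Definition sgp_xbar t om := n%:R^-1 *: \sum_(i < n) sgp_x t i om.
Definition sgp_grad t j om := g j (sgp_z t j om) (xi t j om).
End Random.

(* Squaring the almost-sure consensus bound and applying Cauchy-Schwarz against the
   geometric weights q^(t-s) (total mass <= 1/(1-q)) bounds ||xbar(t) - z_i(t)||^2 by
   3 C^2 q^(2t) X0^2 + (3/2) (eta C)^2/(1-q) sum_s q^(t-s) max_j ||g_j(s)||^2, and each
   ||g_j(s)||^2 splits into noise, L^2 times consensus errors, dissimilarity zeta^2 and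
   ||grad f(xbar(s))||^2.  Summing over t and taking expectations gives a linear inequality
   ((1-q)^2 - 9 eta^2 C^2 L^2 n) M <= 3 C^2 X0^2 + 3 eta^2 C^2 n sigma^2 T
   + 9 eta^2 C^2 n zeta^2 T + 9 eta^2 C^2 S between the summed consensus error M and the
   summed squared gradient norm S, while the descent inequality gives
   S <= 2 (f(xbar0) - f^* )/eta + L eta sigma^2 T/n + L^2 M; eliminating M yields the
   claim.  These manipulations are legitimate because every iterate has a finite second
   moment: it is built from x0 by linear maps, L-Lipschitz gradients and finite-variance
   noise. *)

From HB Require Import structures.
From mathcomp Require Import all_boot all_order all_algebra.
From mathcomp Require Import all_classical all_reals all_analysis.
From mathcomp Require Import measurable_realfun.
From mathcomp Require Import ring lra.
Import Order.TTheory GRing.Theory Num.Theory.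
Import numFieldNormedType.Exports.
Set Implicit Arguments. Unset Strict Implicit. Unset Printing Implicit Defensive.
Local Open Scope ring_scope.

Section Dotv.
Variables (R : realType) (d : nat).
Implicit Types u v w : 'rV[R]_d.

Lemma dotv_ge0 v : 0 <= dotv v v.
Proof. by apply: sumr_ge0 => k _; rewrite -expr2 sqr_ge0. Qed.

Lemma enorm_sqr v : enorm v ^+ 2 = dotv v v.
Proof. by rewrite /enorm sqr_sqrtr // dotv_ge0. Qed.

Lemma enorm_ge0 v : 0 <= enorm v.
Proof. exact: sqrtr_ge0. Qed.

Lemma normr_coord_le_enorm v k : `|v ord0 k| <= enorm v.
Proof.
rewrite -sqrtr_sqr /enorm ler_sqrt ?dotv_ge0 // /dotv (bigD1 k) //= -expr2.
by rewrite lerDl; apply: sumr_ge0 => i _; rewrite -expr2 sqr_ge0.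
Qed.

Lemma enorm_le_sum_normr v : enorm v <= \sum_k `|v ord0 k|.
Proof.
rewrite -(ler_pXn2r (ltn0Sn 1)) ?nnegrE ?enorm_ge0 ?sumr_ge0 // enorm_sqr /dotv.
elim: (index_enum _) => [|k s IH]; first by rewrite !big_nil expr0n.
rewrite !big_cons -expr2 -(real_normK (num_real (v ord0 k))).
have := normr_ge0 (v ord0 k); have : 0 <= \sum_(i <- s) `|v ord0 i| by exact: sumr_ge0.
nra.
Qed.

Lemma dotvN v : dotv (- v) (- v) = dotv v v.
Proof. by apply: eq_bigr => k _; rewrite !mxE mulrNN. Qed.

Lemma dotvZ c v : dotv (c *: v) (c *: v) = c ^+ 2 * dotv v v.
Proof. by rewrite /dotv mulr_sumr; apply: eq_bigr => k _; rewrite !mxE; ring. Qed.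

Lemma dotvD_le u v : dotv (u + v) (u + v) <= 2 * dotv u u + 2 * dotv v v.
Proof.
rewrite /dotv !mulr_sumr -big_split /=; apply: ler_sum => k _; rewrite !mxE.
have := sqr_ge0 (u ord0 k - v ord0 k); nra.
Qed.

Lemma dotvD3_le u v w :
  dotv (u + v + w) (u + v + w) <= 3 * dotv u u + 3 * dotv v v + 3 * dotv w w.
Proof.
rewrite /dotv !mulr_sumr -!big_split /=; apply: ler_sum => k _; rewrite !mxE.
have := sqr_ge0 (u ord0 k - v ord0 k); have := sqr_ge0 (w ord0 k - v ord0 k).
have := sqr_ge0 (u ord0 k - w ord0 k); nra.
Qed.

End Dotv.

Lemma dotv_le_of_enorm_le (R : realType) d e (u : 'rV[R]_d) (v : 'rV[R]_e) (K : R) :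
  enorm u <= K * enorm v -> dotv u u <= K ^+ 2 * dotv v v.
Proof.
move=> uv; rewrite -!enorm_sqr -exprMn ler_sqr ?nnegrE ?enorm_ge0 //.
exact: le_trans (enorm_ge0 u) uv.
Qed.

Section GeometricConvolution.
Variable R : realFieldType.
Implicit Types (q c : R) (Q : nat -> R).

Lemma sqr_wsum_le (I : Type) (s : seq I) (w y : I -> R) : (forall i, 0 <= w i) ->
  (\sum_(i <- s) w i * y i) ^+ 2 <= (\sum_(i <- s) w i) * \sum_(i <- s) w i * y i ^+ 2.
Proof.
move=> w0; elim: s => [|i s IH]; first by rewrite !big_nil expr0n mul0r.
rewrite !big_cons.
set A := \sum_(j <- s) w j * y j in IH *; set P := \sum_(j <- s) w j in IH *.
set Q := \sum_(j <- s) w j * y j ^+ 2 in IH *.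
have P0 : 0 <= P by exact: sumr_ge0.
have Q0 : 0 <= Q by apply: sumr_ge0 => j _; rewrite mulr_ge0 ?sqr_ge0.
(* [P (Q + P y^2 - 2 y A) >= (P y - A)^2], so [2 y A <= Q + P y^2] *)
have cross : 2 * y i * A <= Q + P * y i ^+ 2.
  have [P_eq0|P_neq0] := eqVneq P 0.
    have : A ^+ 2 <= 0 by rewrite -(mul0r Q) -P_eq0.
    by rewrite P_eq0; nra.
  have P_gt0 : 0 < P by rewrite lt0r P_neq0.
  have := sqr_ge0 (P * y i - A); nra.
have := w0 i; nra.
Qed.

Definition geo_conv q Q t := \sum_(s < t.+1) q ^+ (t - s) * Q s.

Lemma geo_convS q Q t : geo_conv q Q t.+1 = q * geo_conv q Q t + Q t.+1.
Proof.
rewrite /geo_conv big_ord_recr /= subnn expr0 mul1r mulr_sumr; congr (_ + _).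
by apply: eq_bigr => s _ /=; rewrite mulrA -exprS subSn // -ltnS.
Qed.

Lemma geo_conv_ge0 q Q t : 0 <= q -> (forall s, 0 <= Q s) -> 0 <= geo_conv q Q t.
Proof. by move=> q0 Q0; apply: sumr_ge0 => s _; rewrite mulr_ge0 ?exprn_ge0. Qed.

Lemma geo_conv_ge q Q t : 0 <= q -> (forall s, 0 <= Q s) -> Q t <= geo_conv q Q t.
Proof.
move=> q0 Q0; case: t => [|t]; first by rewrite /geo_conv big_ord1 subnn mul1r.
by rewrite geo_convS lerDr mulr_ge0 // geo_conv_ge0.
Qed.

Lemma geo_conv1_le q t : 0 <= q < 1 -> geo_conv q (fun=> 1) t <= (1 - q)^-1.
Proof.
move=> /andP[q0 q1]; have q1' : 0 < 1 - q by rewrite subr_gt0.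
elim: t => [|t IH].
  by rewrite /geo_conv big_ord1 mulr1 invf_ge1 // lerBlDr lerDl.
rewrite geo_convS.
have -> : (1 - q)^-1 = q * (1 - q)^-1 + 1 by field; rewrite gt_eqF.
by rewrite lerD2r ler_wpM2l.
Qed.

Lemma sum_expr_le q T : 0 <= q < 1 -> \sum_(t < T) q ^+ t <= (1 - q)^-1.
Proof.
move=> /andP[q0 q1]; have q1' : 0 < 1 - q by rewrite subr_gt0.
have telescope : (1 - q) * \sum_(t < T) q ^+ t + q ^+ T = 1.
  elim: T => [|T IH]; first by rewrite big_ord0 mulr0 add0r.
  by rewrite big_ord_recr /= exprS -[RHS]IH; ring.
rewrite -(ler_pM2l q1') mulfV ?gt_eqF //.
have := exprn_ge0 T q0; lra.
Qed.

Lemma sum_geo_conv_le q Q T : 0 <= q < 1 -> (forall s, 0 <= Q s) ->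
  \sum_(t < T) geo_conv q Q t <= (1 - q)^-1 * \sum_(t < T) Q t.
Proof.
move=> /andP[q0 q1] Q0; have q1' : 0 < 1 - q by rewrite subr_gt0.
have telescope : forall T,
    (1 - q) * \sum_(t < T) geo_conv q Q t + geo_conv q Q T = \sum_(t < T.+1) Q t.
  elim=> [|T' IH]; first by rewrite big_ord0 mulr0 add0r /geo_conv !big_ord1 /= mul1r.
  by rewrite big_ord_recr /= geo_convS [RHS]big_ord_recr /= -IH; ring.
rewrite -(ler_pM2l q1') mulrA mulfV ?gt_eqF // mul1r.
have := telescope T; rewrite big_ord_recr /=.
have := geo_conv_ge T q0 Q0; lra.
Qed.

(* Cauchy-Schwarz with the weights [q ^+ (t - s)], whose total mass is at most [(1 - q)^-1]. *)
Lemma sqr_le_geo_conv e A c q (m Q : nat -> R) t :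
  0 <= e -> 0 <= A -> 0 <= c -> 0 <= q < 1 ->
  (forall s, 0 <= m s) -> (forall s, m s ^+ 2 <= Q s) ->
  e <= A + c * geo_conv q m t ->
  e ^+ 2 <= 3 * A ^+ 2 + 3 / 2 * c ^+ 2 * (1 - q)^-1 * geo_conv q Q t.
Proof.
move=> e0 A0 c0 q_bounds m0 mQ he; have [q0 q1] := andP q_bounds.
have Q0 s : 0 <= Q s by apply: le_trans (mQ s); exact: sqr_ge0.
set B := geo_conv q m t in he.
have B0 : 0 <= B by exact: geo_conv_ge0.
have B2 : B ^+ 2 <= (1 - q)^-1 * geo_conv q Q t.
  apply: le_trans (sqr_wsum_le _ _ (fun s : 'I_t.+1 => exprn_ge0 (t - s) q0)) _.
  apply: ler_pM.
  - by apply: sumr_ge0 => s _; rewrite exprn_ge0.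
  - by apply: sumr_ge0 => s _; rewrite mulr_ge0 ?exprn_ge0 ?sqr_ge0.
  - have := geo_conv1_le t q_bounds; rewrite /geo_conv.
    by under eq_bigr do rewrite mulr1.
  - by apply: ler_sum => s _; rewrite ler_wpM2l ?exprn_ge0.
have cB2 : (c * B) ^+ 2 <= c ^+ 2 * ((1 - q)^-1 * geo_conv q Q t).
  by rewrite exprMn ler_wpM2l ?sqr_ge0.
have e2 : e ^+ 2 <= (A + c * B) ^+ 2 by have := mulr_ge0 c0 B0; nra.
have := sqr_ge0 (2 * A - c * B); lra.
Qed.

End GeometricConvolution.

Lemma le_of_coupled_bounds (R : realFieldType) (Pk b c A U m s : R) :
  0 < Pk -> 0 <= c -> Pk * m <= U + b * s -> s <= A + c * m ->
  (1 - c * b / Pk) * s <= A + c * U / Pk.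
Proof.
move=> Pk_gt0 c_ge0 m_le s_le; rewrite -(ler_pM2l Pk_gt0).
have -> : Pk * ((1 - c * b / Pk) * s) = Pk * s - c * b * s by field; rewrite gt_eqF.
have -> : Pk * (A + c * U / Pk) = Pk * A + c * U by field; rewrite gt_eqF.
have := ler_wpM2l c_ge0 m_le; have := ler_wpM2l (ltW Pk_gt0) s_le; lra.
Qed.

Lemma min_pos_entry_le1 (R : realFieldType) n (W : 'M[R]_n) (delta : R) j :
  (forall i j, 0 <= W i j) -> \sum_i W i j = 1 ->
  (forall i j, 0 < W i j -> delta <= W i j) -> delta <= 1.
Proof.
move=> W_ge0 W_col delta_le.
have [i Wij_gt0] : exists i, 0 < W i j.
  apply/existsP; apply: contraT; rewrite negb_exists => /forallP W0.
  have : \sum_i W i j = 0.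
    by apply: big1 => i _; apply/eqP; rewrite eq_le W_ge0 andbT leNgt W0.
  by rewrite W_col => /eqP; rewrite oner_eq0.
apply: le_trans (delta_le _ _ Wij_gt0) _; rewrite -W_col.
by rewrite (bigD1 i) //= lerDl sumr_ge0.
Qed.

Lemma powR_inv_natr_bounds (R : realType) (b : R) (k : nat) :
  0 <= b < 1 -> (0 < k)%N -> 0 <= powR b k%:R^-1 < 1.
Proof.
move=> /andP[b_ge0 b_lt1] k_gt0; rewrite powR_ge0 /=.
have [->|b_neq0] := eqVneq b 0; first by rewrite powR0 // invr_eq0 pnatr_eq0 -lt0n.
apply: (lt_le_trans (@gt0_ltr_powR R k%:R^-1 _ b 1 _ _ b_lt1));
  by rewrite ?powR1 ?nnegrE ?invr_gt0 ?ltr0n.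
Qed.

Lemma mixing_rate_bounds (R : realType) n (W : nat -> 'M[R]_n) (delta : R) k :
  (0 < n)%N -> (0 < k)%N -> (forall t i j, 0 <= W t i j) ->
  (forall t j, \sum_i W t i j = 1) -> 0 < delta ->
  (forall t i j, 0 < W t i j -> delta <= W t i j) ->
  0 <= powR (1 - delta ^+ k) k%:R^-1 < 1.
Proof.
move=> n_gt0 k_gt0 W_ge0 W_col delta_gt0 delta_min; apply: powR_inv_natr_bounds => //.
have delta_le1 : delta <= 1.
  exact: min_pos_entry_le1 (W_ge0 0%N) (W_col 0%N (Ordinal n_gt0)) (delta_min 0%N).
have dk_gt0 : 0 < delta ^+ k by rewrite exprn_gt0.
by rewrite subr_ge0 exprn_ile1 ?(ltW delta_gt0) //= ltrBlDr ltrDl.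
Qed.

Section LipschitzMeasurability.
Variables (R : realType) (d : nat) (dT : measure_display) (T : measurableType dT).
Implicit Types (v : 'rV[R]_d) (k : 'I_d) (m : nat).
Local Open Scope classical_set_scope.

Definition round_row (m : nat) (v : 'rV[R]_d) : 'rV[R]_d :=
  \row_k ((Num.floor (m.+1%:R * v ord0 k))%:~R / m.+1%:R).

Lemma round_row_err m v k : `|v ord0 k - round_row m v ord0 k| <= m.+1%:R^-1.
Proof.
have m0 : 0 < m.+1%:R :> R by rewrite ltr0Sn.
rewrite mxE; have /andP[fl_le fl_gt] := floor_itv (m.+1%:R * v ord0 k).
rewrite intrD in fl_gt; set fl := (Num.floor _)%:~R in fl_le fl_gt *.
have -> : v ord0 k - fl / m.+1%:R = (m.+1%:R * v ord0 k - fl) / m.+1%:R.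
  by field; rewrite gt_eqF.
have inv_ge0 : 0 <= m.+1%:R^-1 :> R by rewrite invr_ge0 ltW.
rewrite normrM (ger0_norm inv_ge0) ger0_norm ?subr_ge0 //.
by rewrite -[leRHS]mul1r ler_pM2r ?invr_gt0 //; lra.
Qed.

(* [round_row m \o V] takes countably many values, each on a measurable cell. *)
Lemma measurable_round_row (V : T -> 'rV[R]_d) (H : 'rV[R]_d -> R) m :
  (forall k, measurable_fun setT (fun om => V om ord0 k)) ->
  measurable_fun setT (fun om => H (round_row m (V om))).
Proof.
move=> mV _ Y mY.
pose grid (z : {ffun 'I_d -> int}) : 'rV[R]_d := \row_k ((z k)%:~R / m.+1%:R).
pose cell (z : {ffun 'I_d -> int}) :=
  \bigcap_(k in [set: 'I_d]) [set om | Num.floor (m.+1%:R * V om ord0 k) = z k].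
have -> : [set: T] `&` (fun om => H (round_row m (V om))) @^-1` Y =
    \bigcup_z (if pselect (Y (H (grid z))) then cell z else set0).
  apply/seteqP; split => om /=.
    move=> [_ Yom]; exists [ffun k => Num.floor (m.+1%:R * V om ord0 k)] => //.
    case: pselect => [_ k _|notY]; first by rewrite /= ffunE.
    apply: notY; congr (Y (H _)): Yom.
    by apply/rowP => k; rewrite !mxE ffunE.
  move=> [z _]; case: pselect => // Yz cell_om; split => //.
  suff -> : round_row m (V om) = grid z by [].
  by apply/rowP => k; rewrite !mxE cell_om.
apply: countable_bigcupT_measurable; first exact: countableP.
move=> z; case: pselect => Yz; last exact: measurable0.
apply: fin_bigcap_measurable; first exact: finite_finset.
move=> k kT; have m0 : 0 < m.+1%:R :> R by rewrite ltr0Sn.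
have -> : [set om | Num.floor (m.+1%:R * V om ord0 k) = z k] =
    [set: T] `&` (fun om => V om ord0 k) @^-1` `[(z k)%:~R / m.+1%:R, (z k + 1)%:~R / m.+1%:R[.
  apply/seteqP; split => om /=.
    move=> <-; split => //; rewrite in_itv /= ler_pdivrMr // ltr_pdivlMr //.
    by rewrite ![_ * m.+1%:R]mulrC floor_itv.
  move=> [_]; rewrite in_itv /= ler_pdivrMr // ltr_pdivlMr // => /floor_def.
  by rewrite ![_ * m.+1%:R]mulrC.
by apply: mV => //; exact: measurable_itv.
Qed.

(* [H \o V] is the pointwise limit of [H \o round_row m \o V]. *)
Lemma measurable_lipschitz_comp (V : T -> 'rV[R]_d) (H : 'rV[R]_d -> R) (K : R) :
  (forall k, measurable_fun setT (fun om => V om ord0 k)) ->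
  (forall u v, `|H u - H v| <= K * enorm (u - v)) ->
  measurable_fun setT (fun om => H (V om)).
Proof.
move=> mV HK.
apply: (measurable_fun_cvg
  (h := fun m om => H (round_row m (V om)))) => [m|om _].
  exact: measurable_round_row.
apply/cvgrPdist_le => e e0.
pose K' := `|K| * d%:R + 1.
have K'0 : 0 < K' by rewrite ltr_pwDr // mulr_ge0 // ler0n.
have eK : 0 < e / K' by rewrite divr_gt0.
near=> m.
have m_small : m.+1%:R^-1 < e / K'.
  by near: m; exact: (near_infty_natSinv_lt (PosNum eK)).
apply: (le_trans (HK _ _)).
have err : enorm (V om - round_row m (V om)) <= d%:R * m.+1%:R^-1.
  apply: le_trans (enorm_le_sum_normr _) _.
  rewrite mulr_natl -[X in _ *+ X]card_ord -sumr_const.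
  apply: ler_sum => k _.
  by have := round_row_err m (V om) k; rewrite !mxE.
apply: le_trans (_ : `|K| * (d%:R * m.+1%:R^-1) <= e).
  apply: le_trans (ler_wpM2r (enorm_ge0 _) (ler_norm K)) _.
  exact: ler_wpM2l.
rewrite -(ltr_pM2l K'0) mulrCA mulfV ?gt_eqF // mulr1 in m_small.
apply/ltW/(le_lt_trans _ m_small).
by rewrite mulrA ler_wpM2r ?invr_ge0 ?ler0n // lerDl.
Unshelve. all: by end_near.
Qed.

End LipschitzMeasurability.

Section RealIntegrals.
Variables (R : realType) (dO : measure_display) (Omega : measurableType dO).
Variable Pr : probability Omega R.
Local Notation integrable f := (Pr.-integrable setT (EFin \o f)).
Implicit Types f g : Omega -> R.

Lemma integrable_cst_EFin (c : R) : integrable (fun=> c).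
Proof. exact: finite_measure_integrable_cst. Qed.

Lemma integrableD_EFin f g : integrable f -> integrable g ->
  integrable (fun om => f om + g om).
Proof.
move=> intf intg; apply: eq_integrable (integrableD measurableT intf intg) => //.
Qed.

Lemma integrableZl_EFin (c : R) f : integrable f -> integrable (fun om => c * f om).
Proof.
move=> intf; apply: eq_integrable (integrableZl measurableT c intf) => //.
Qed.

Lemma integrable_sum_EFin (I : Type) (s : seq I) (F : I -> Omega -> R) :
  (forall i, integrable (F i)) -> integrable (fun om => \sum_(i <- s) F i om).
Proof.
move=> intF; elim: s => [|i s IH].
  by under eq_fun do rewrite big_nil; exact: integrable_cst_EFin.
by under eq_fun do rewrite big_cons; exact: integrableD_EFin.
Qed.

Lemma integrable_le_EFin f g : measurable_fun setT f ->
  (forall om, 0 <= f om <= g om) -> integrable g -> integrable f.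
Proof.
move=> mf fg intg; apply: le_integrable intg => //; first exact/measurable_EFinP.
move=> om _ /=; have /andP[f0 fg'] := fg om.
by rewrite lee_fin !ger0_norm // (le_trans f0).
Qed.

Lemma integrable_of_integral_lt f : measurable_fun setT f -> (forall om, 0 <= f om) ->
  (\int[Pr]_om (f om)%:E < +oo)%E -> integrable f.
Proof.
move=> mf f0 fint; apply/integrableP; split; first exact/measurable_EFinP.
by under eq_integral do rewrite /= ger0_norm //.
Qed.

Lemma integral_EFin f : integrable f -> (\int[Pr]_om (f om)%:E)%E = (\int[Pr]_om f om)%:E.
Proof. by move=> intf; rewrite /Rintegral fineK //; exact: integrable_fin_num. Qed.

Lemma Rintegral_cst_prob (c : R) : \int[Pr]_om c = c.
Proof. by rewrite Rintegral_cst // [X in fine X]probability_setT mulr1. Qed.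

Lemma Rintegral_sum (I : Type) (s : seq I) (F : I -> Omega -> R) :
  (forall i, integrable (F i)) ->
  \int[Pr]_om (\sum_(i <- s) F i om) = \sum_(i <- s) \int[Pr]_om F i om.
Proof.
move=> intF; elim: s => [|i s IH].
  by under eq_Rintegral do rewrite big_nil; rewrite big_nil Rintegral_cst_prob.
under eq_Rintegral do rewrite big_cons.
by rewrite big_cons RintegralD ?IH //; exact: integrable_sum_EFin.
Qed.

Lemma le_Rintegral_ae f g : integrable f -> integrable g ->
  (forall om, 0 <= f om) -> (forall om, 0 <= g om) ->
  (\forall om \ae Pr, f om <= g om) -> \int[Pr]_om f om <= \int[Pr]_om g om.
Proof.
move=> intf intg f0 g0 fg; rewrite -lee_fin -!integral_EFin //.
apply: ae_ge0_le_integral => //.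
- by move=> om _; rewrite lee_fin.
- by case/integrableP: intf.
- by move=> om _; rewrite lee_fin.
- by case/integrableP: intg.
- by apply: filterS fg => om ? _; rewrite lee_fin.
Qed.

Definition square_integrable (d : nat) (V : Omega -> 'rV[R]_d) :=
  (forall k, measurable_fun setT (fun om => V om ord0 k)) /\
  integrable (fun om => dotv (V om) (V om)).

Lemma square_integrable_cst d (v : 'rV[R]_d) : square_integrable (fun=> v).
Proof. by split=> [k|]; [exact: measurable_cst | exact: integrable_cst_EFin]. Qed.

Lemma square_integrableD d (U V : Omega -> 'rV[R]_d) : square_integrable U -> square_integrable V ->
  square_integrable (fun om => U om + V om).
Proof.
move=> [mU intU] [mV intV]; have mUV k : measurable_fun setT (fun om => (U om + V om) ord0 k).
  by under eq_fun do rewrite mxE; exact: measurable_funD.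
split=> //; apply: (integrable_le_EFin
  (g := fun om => 2 * dotv (U om) (U om) + 2 * dotv (V om) (V om))) => [|om|].
- by apply: measurable_sum => k; exact: measurable_funM.
- by rewrite dotv_ge0 dotvD_le.
- by apply: integrableD_EFin; exact: integrableZl_EFin.
Qed.

Lemma square_integrableZ d (c : R) (V : Omega -> 'rV[R]_d) : square_integrable V ->
  square_integrable (fun om => c *: V om).
Proof.
move=> [mV intV]; split => [k|].
  by under eq_fun do rewrite mxE; apply: measurable_funM => //; exact: measurable_cst.
by under eq_fun do rewrite dotvZ; exact: integrableZl_EFin.
Qed.

Lemma square_integrableB d (U V : Omega -> 'rV[R]_d) : square_integrable U -> square_integrable V ->
  square_integrable (fun om => U om - V om).
Proof.
move=> sU sV; have := square_integrableD sU (square_integrableZ (-1) sV).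
by under eq_fun do rewrite scaleN1r.
Qed.

Lemma square_integrable_sum d (I : Type) (s : seq I) (F : I -> Omega -> 'rV[R]_d) :
  (forall i, square_integrable (F i)) ->
  square_integrable (fun om => \sum_(i <- s) F i om).
Proof.
move=> sF; elim: s => [|i s IH].
  by under eq_fun do rewrite big_nil; exact: square_integrable_cst.
by under eq_fun do rewrite big_cons; exact: square_integrableD.
Qed.

Lemma square_integrable_lipschitz d e (H : 'rV[R]_d -> 'rV[R]_e) (K : R)
    (V : Omega -> 'rV[R]_d) :
  (forall u v, enorm (H u - H v) <= K * enorm (u - v)) ->
  square_integrable V -> square_integrable (fun om => H (V om)).
Proof.
move=> HK [mV intV]; have mHV k : measurable_fun setT (fun om => H (V om) ord0 k).
  apply: (measurable_lipschitz_comp (H := fun v => H v ord0 k)) mV _ => u v.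
  by apply: le_trans (HK u v); have := normr_coord_le_enorm (H u - H v) k; rewrite !mxE.
split=> //; apply: (integrable_le_EFin
  (g := fun om => 2 * (K ^+ 2 * dotv (V om) (V om)) + 2 * dotv (H 0) (H 0))) => [|om|].
- by apply: measurable_sum => k; exact: measurable_funM.
- rewrite dotv_ge0 /=; have := dotvD_le (H (V om) - H 0) (H 0); rewrite subrK.
  have := dotv_le_of_enorm_le (HK (V om) 0); rewrite subr0; lra.
- apply: integrableD_EFin; last exact: integrable_cst_EFin.
  by do 2 apply: integrableZl_EFin.
Qed.

Lemma integral_enorm_sqr d (V : Omega -> 'rV[R]_d) : square_integrable V ->
  (\int[Pr]_om (enorm (V om) ^+ 2)%:E)%E = (\int[Pr]_om dotv (V om) (V om))%:E.
Proof.
by move=> [_ intV]; rewrite -integral_EFin //; under eq_integral do rewrite enorm_sqr.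
Qed.

End RealIntegrals.

Fixpoint push_sum_weight (R : realType) n (W : nat -> 'M[R]_n) (t : nat) : 'I_n -> R :=
  if t is t'.+1 then fun i => \sum_(j < n) W t' i j * push_sum_weight W t' j
  else fun=> 1.

Section SGPAnalysis.
Variables (R : realType) (n d : nat) (Xi : Type) (dO : measure_display).
Variables (Omega : measurableType dO) (Pr : probability Omega R).
Variables (W : nat -> 'M[R]_n) (g : 'I_n -> 'rV[R]_d -> Xi -> 'rV[R]_d).
Variables (eta : R) (x0 : 'I_n -> 'rV[R]_d) (xi : nat -> 'I_n -> Omega -> Xi).
Variables (gradf : 'I_n -> 'rV[R]_d -> 'rV[R]_d) (L : R).

Local Notation x := (sgp_x W g eta x0 xi).
Local Notation w := (sgp_w W g eta x0 xi).
Local Notation z := (sgp_z W g eta x0 xi).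
Local Notation gr := (sgp_grad W g eta x0 xi).
Local Notation xbar := (sgp_xbar W g eta x0 xi).

Lemma sgp_wE t i om : w t i om = push_sum_weight W t i.
Proof.
elim: t i => [|t IH] i //=.
by rewrite /sgp_w /=; apply: eq_bigr => j _; rewrite -IH.
Qed.

Hypothesis gradf_lipschitz : forall i u v, enorm (gradf i u - gradf i v) <= L * enorm (u - v).
Hypothesis grad_measurable :
  forall t i k, measurable_fun setT (fun om => gr t i om ord0 k).
Variable sigma : R.
Hypothesis grad_variance : forall t i,
  (\int[Pr]_om (enorm (gr t i om - gradf i (z t i om)) ^+ 2)%:E <= (sigma ^+ 2)%:E)%E.

Lemma sgp_noise_square_integrable t i : square_integrable Pr (z t i) ->
  square_integrable Pr (fun om => gr t i om - gradf i (z t i om)).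
Proof.
move=> sz; have [mgz _] := square_integrable_lipschitz (gradf_lipschitz i) sz.
have mnoise k : measurable_fun setT (fun om => (gr t i om - gradf i (z t i om)) ord0 k).
  by under eq_fun do rewrite !mxE; exact: measurable_funB.
split=> //; apply: integrable_of_integral_lt => [|om|].
- by apply: measurable_sum => k; exact: measurable_funM.
- exact: dotv_ge0.
- under eq_integral do rewrite -enorm_sqr.
  exact: le_lt_trans (grad_variance t i) (ltry _).
Qed.

Lemma sgp_z_square_integrable_of_x t i : square_integrable Pr (x t i) ->
  square_integrable Pr (z t i).
Proof.
move=> sx; have := square_integrableZ (push_sum_weight W t i)^-1 sx.
by under eq_fun => om do rewrite -(sgp_wE t i om).
Qed.

Lemma sgp_x_square_integrable t i : square_integrable Pr (x t i).
Proof.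
elim: t i => [|t IH] i; first exact: square_integrable_cst.
apply: square_integrable_sum => j; apply: square_integrableZ.
apply: square_integrableB (IH j) _; apply: square_integrableZ.
have sz := sgp_z_square_integrable_of_x (IH j).
have := square_integrableD (sgp_noise_square_integrable sz)
  (square_integrable_lipschitz (gradf_lipschitz j) sz).
by under eq_fun do rewrite subrK.
Qed.

Lemma sgp_z_square_integrable t i : square_integrable Pr (z t i).
Proof. exact/sgp_z_square_integrable_of_x/sgp_x_square_integrable. Qed.

Lemma sgp_xbar_square_integrable t : square_integrable Pr (xbar t).
Proof.
apply: square_integrableZ; apply: square_integrable_sum => i.
exact: sgp_x_square_integrable.
Qed.

Local Notation gradf_avg u := (n%:R^-1 *: \sum_(i < n) gradf i u).
Local Notation dev t i om := (dotv (xbar t om - z t i om) (xbar t om - z t i om)).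
Local Notation noise t j om :=
  (dotv (gr t j om - gradf j (z t j om)) (gr t j om - gradf j (z t j om))).
Local Notation gnorm t om := (dotv (gradf_avg (xbar t om)) (gradf_avg (xbar t om))).

Lemma sgp_grad_avg_square_integrable t :
  square_integrable Pr (fun om => gradf_avg (xbar t om)).
Proof.
apply: square_integrableZ; apply: square_integrable_sum => i.
exact: square_integrable_lipschitz (gradf_lipschitz i) (sgp_xbar_square_integrable t).
Qed.

Lemma sgp_sum_gnorm_EFin T :
  (\sum_(t < T) \int[Pr]_om (enorm (gradf_avg (xbar t om)) ^+ 2)%:E)%E
  = (\sum_(t < T) \int[Pr]_om gnorm t om)%:E.
Proof.
rewrite -sumEFin; apply: eq_bigr => t _.
exact: integral_enorm_sqr (sgp_grad_avg_square_integrable t).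
Qed.

Lemma sgp_descent_bound T (K : R) : 0 < eta -> L * eta <= 1 ->
  ((eta / 2)%:E * (\sum_(t < T) \int[Pr]_om (enorm (gradf_avg (xbar t om)) ^+ 2)%:E)
   + ((eta - L * eta ^+ 2) / 2)%:E * (\sum_(t < T) \int[Pr]_om
       (enorm (n%:R^-1 *: \sum_(i < n) gradf i (z t i om)) ^+ 2)%:E)
   <= K%:E + (eta * L ^+ 2 / 2)%:E * (\sum_(t < T) ((n%:R^-1)%:E
       * \sum_(i < n) \int[Pr]_om (enorm (xbar t om - z t i om) ^+ 2)%:E)))%E ->
  \sum_(t < T) \int[Pr]_om gnorm t om
    <= 2 * K / eta + L ^+ 2 * \sum_(t < T) (n%:R^-1 * \sum_(i < n) \int[Pr]_om dev t i om).
Proof.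
move=> eta_gt0 L_eta cumulative.
have M_EFin : (\sum_(t < T) ((n%:R^-1)%:E
    * \sum_(i < n) \int[Pr]_om (enorm (xbar t om - z t i om) ^+ 2)%:E))%E
    = (\sum_(t < T) (n%:R^-1 * \sum_(i < n) \int[Pr]_om dev t i om))%:E.
  rewrite -sumEFin; apply: eq_bigr => t _; rewrite EFinM -sumEFin; congr (_ * _)%E.
  apply: eq_bigr => i _; apply: integral_enorm_sqr.
  exact/square_integrableB/sgp_z_square_integrable/sgp_xbar_square_integrable.
have drift_ge0 : (0 <= ((eta - L * eta ^+ 2) / 2)%:E * (\sum_(t < T) \int[Pr]_om
    (enorm (n%:R^-1 *: \sum_(i < n) gradf i (z t i om)) ^+ 2)%:E))%E.
  rewrite mule_ge0 ?lee_fin ?divr_ge0 // ?subr_ge0; last first.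
    by apply: sume_ge0 => t _; apply: integral_ge0 => om _; rewrite lee_fin sqr_ge0.
  by rewrite expr2 mulrA ler_piMl // ltW.
move: cumulative; rewrite sgp_sum_gnorm_EFin M_EFin -!EFinM -EFinD.
move=> /(le_trans (leeDl _ drift_ge0)); rewrite lee_fin => bound.
rewrite -(ler_pM2l (divr_gt0 eta_gt0 (ltr0Sn _ 1))).
apply: le_trans bound _; rewrite le_eqVlt; apply/predU1P; left.
by field; rewrite gt_eqF.
Qed.

Variable zeta : R.
Hypothesis dissimilarity : forall u,
  n%:R^-1 * \sum_(i < n) enorm (gradf i u - gradf_avg u) ^+ 2 <= zeta ^+ 2.
Hypothesis n_gt0 : (0 < n)%N.

Local Notation Q s om := (\sum_(j < n) (2 * noise s j om + 6 * L ^+ 2 * dev s j om)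
  + 6 * (n%:R * zeta ^+ 2) + 6 * gnorm s om).

Lemma sgp_grad_sqr_le s j om : dotv (gr s j om) (gr s j om) <= Q s om.
Proof.
set gz := gradf j (z s j om); set gx := gradf j (xbar s om).
set ga := gradf_avg (xbar s om).
have split_noise := dotvD_le (gr s j om - gz) gz; rewrite subrK in split_noise.
have split_grad := dotvD3_le (gz - gx) (gx - ga) ga; rewrite addrA !subrK in split_grad.
have lip : dotv (gz - gx) (gz - gx) <= L ^+ 2 * dev s j om.
  rewrite -dotvN opprB; apply: dotv_le_of_enorm_le.
  exact: gradf_lipschitz.
have dissim : \sum_(i < n) dotv (gradf i (xbar s om) - ga) (gradf i (xbar s om) - ga)
    <= n%:R * zeta ^+ 2.
  have := dissimilarity (xbar s om); under eq_bigr do rewrite enorm_sqr.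
  by rewrite ler_pdivrMl ?ltr0n // mulrC.
have one_le_sum (F : 'I_n -> R) : (forall i, 0 <= F i) -> F j <= \sum_i F i.
  by move=> F0; rewrite (bigD1 j) //= lerDl sumr_ge0.
have term_ge0 i : 0 <= 2 * noise s i om + 6 * L ^+ 2 * dev s i om.
  have := dotv_ge0 (xbar s om - z s i om).
  by have := dotv_ge0 (gr s i om - gradf i (z s i om)); nra.
have := one_le_sum (fun i => dotv (gradf i (xbar s om) - ga) (gradf i (xbar s om) - ga))
  (fun i => dotv_ge0 _).
have := one_le_sum (fun i => 2 * noise s i om + 6 * L ^+ 2 * dev s i om) term_ge0.
have := dotv_ge0 (xbar s om - z s j om); have := sqr_ge0 L; lra.
Qed.

Lemma sgp_Q_ge0 s om : 0 <= Q s om.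
Proof. exact: le_trans (dotv_ge0 _) (sgp_grad_sqr_le s (Ordinal n_gt0) om). Qed.

Variables (C q X0 : R).
Hypotheses (eta_ge0 : 0 <= eta) (C_ge0 : 0 <= C) (X0_ge0 : 0 <= X0) (q_bounds : 0 <= q < 1).
Hypothesis consensus : forall t i, {ae Pr, forall om,
  enorm (xbar t om - z t i om) <= C * q ^+ t * X0
    + eta * C * \sum_(s < t.+1) q ^+ (t - s) * \big[Num.max/0]_(j < n) enorm (gr s j om)}.

Lemma sgp_dev_le_ae t i : \forall om \ae Pr, dev t i om <=
  3 * (C * q ^+ t * X0) ^+ 2 + 3 / 2 * (eta * C) ^+ 2 * (1 - q)^-1 * geo_conv q (fun s => Q s om) t.
Proof.
have [q0 _] := andP q_bounds.
apply: filterS (consensus t i) => om bound; rewrite -enorm_sqr.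
apply: (sqr_le_geo_conv (m := fun s => \big[Num.max/0]_(j < n) enorm (gr s j om)))
  bound => [||||s|s].
- exact: enorm_ge0.
- by rewrite !mulr_ge0 ?exprn_ge0.
- exact: mulr_ge0.
- exact: q_bounds.
- exact: bigmax_ge_id.
- have max_le : \big[Num.max/0]_(j < n) enorm (gr s j om) <= Num.sqrt (Q s om).
    apply: bigmax_le => [|j _]; first exact: sqrtr_ge0.
    by rewrite /enorm ler_sqrt ?sgp_Q_ge0 ?sgp_grad_sqr_le.
  rewrite -[leRHS]sqr_sqrtr ?sgp_Q_ge0 // ler_sqr ?nnegrE ?sqrtr_ge0 //.
  exact: bigmax_ge_id.
Qed.

Lemma sgp_sum_dev_le_ae T i : \forall om \ae Pr, \sum_(t < T) dev t i om <=
  3 * C ^+ 2 * X0 ^+ 2 / (1 - q) ^+ 2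
  + 3 / 2 * (eta * C) ^+ 2 / (1 - q) ^+ 2 * \sum_(t < T) Q t om.
Proof.
have [q0 q1] := andP q_bounds; have q1' : 0 < 1 - q by rewrite subr_gt0.
apply: filterS (filter_forall _ (fun t : 'I_T => sgp_dev_le_ae t i)) => om dev_le.
apply: le_trans (ler_sum _ (fun t _ => dev_le t)) _; rewrite big_split /=.
apply: lerD.
  have -> : \sum_(t < T) 3 * (C * q ^+ t * X0) ^+ 2
      = 3 * C ^+ 2 * X0 ^+ 2 * \sum_(t < T) (q ^+ 2) ^+ t.
    by rewrite mulr_sumr; apply: eq_bigr => t _; rewrite -exprM mulnC exprM; ring.
  rewrite ler_wpM2l ?mulr_ge0 ?sqr_ge0 //.
  have q2 : 0 <= q ^+ 2 < 1 by rewrite sqr_ge0 expr_lt1.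
  apply: le_trans (sum_expr_le _ q2) _.
  by rewrite lef_pV2 ?posrE ?exprn_gt0 ?subr_gt0 ?expr_lt1 //; nra.
have Q_ge0 s : 0 <= Q s om by exact: sgp_Q_ge0.
rewrite -mulr_sumr; apply: le_trans (ler_wpM2l _ (sum_geo_conv_le T q_bounds Q_ge0)) _.
  by apply: divr_ge0; [apply: mulr_ge0; [exact: divr_ge0 | exact: sqr_ge0] | exact: ltW].
by rewrite expr2 invfM !mulrA.
Qed.

Local Notation integrable f := (Pr.-integrable setT (EFin \o f)).

Lemma sgp_dev_integrable t i : integrable (fun om => dev t i om).
Proof.
exact: (square_integrableB (sgp_xbar_square_integrable t) (sgp_z_square_integrable t i)).2.
Qed.

Lemma sgp_gnorm_integrable t : integrable (fun om => gnorm t om).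
Proof. exact: (sgp_grad_avg_square_integrable t).2. Qed.

Lemma sgp_Q_integrable s : integrable (fun om => Q s om).
Proof.
apply: integrableD_EFin; last exact/integrableZl_EFin/sgp_gnorm_integrable.
apply: integrableD_EFin; last exact: integrable_cst_EFin.
apply: integrable_sum_EFin => j; apply: integrableD_EFin; apply: integrableZl_EFin.
  exact: (sgp_noise_square_integrable (sgp_z_square_integrable s j)).2.
exact: sgp_dev_integrable.
Qed.

Lemma sgp_Rintegral_Q_le s : \int[Pr]_om Q s om <= 2 * (n%:R * sigma ^+ 2)
  + 6 * L ^+ 2 * \sum_(j < n) \int[Pr]_om dev s j om
  + 6 * (n%:R * zeta ^+ 2) + 6 * \int[Pr]_om gnorm s om.
Proof.
have int_noise j := (sgp_noise_square_integrable (sgp_z_square_integrable s j)).2.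
have int_node j : integrable (fun om => 2 * noise s j om + 6 * L ^+ 2 * dev s j om).
  apply: integrableD_EFin; apply: integrableZl_EFin; first exact: int_noise.
  exact: sgp_dev_integrable.
have node_le j : \int[Pr]_om (2 * noise s j om + 6 * L ^+ 2 * dev s j om)
    <= 2 * sigma ^+ 2 + 6 * L ^+ 2 * \int[Pr]_om dev s j om.
  have int_dev := sgp_dev_integrable s j; have int_nj := int_noise j.
  rewrite RintegralD ?RintegralZl //; [|exact: integrableZl_EFin..].
  rewrite lerD2r ler_pM2l // -lee_fin -integral_EFin //.
  by under eq_integral do rewrite -enorm_sqr; exact: grad_variance.
have int_sum := integrable_sum_EFin (index_enum 'I_n) int_node.
have int_cst := integrable_cst_EFin Pr (6 * (n%:R * zeta ^+ 2)).
rewrite RintegralD //; last exact/integrableZl_EFin/sgp_gnorm_integrable.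
  rewrite RintegralD // Rintegral_cst_prob (Rintegral_sum _ int_node).
  rewrite RintegralZl ?sgp_gnorm_integrable //.
  have -> : n%:R * sigma ^+ 2 = \sum_(j < n) sigma ^+ 2.
    by rewrite sumr_const card_ord mulr_natl.
  rewrite lerD2r lerD2r !mulr_sumr -big_split.
  by apply: ler_sum => j _; exact: node_le.
exact: integrableD_EFin.
Qed.

Lemma sgp_Rintegral_sum_dev_le T i : \sum_(t < T) \int[Pr]_om dev t i om <=
  3 * C ^+ 2 * X0 ^+ 2 / (1 - q) ^+ 2
  + 3 / 2 * (eta * C) ^+ 2 / (1 - q) ^+ 2 * \sum_(t < T) \int[Pr]_om Q t om.
Proof.
have [q0 q1] := andP q_bounds; have q1' : 0 < 1 - q by rewrite subr_gt0.
have int_Q := integrable_sum_EFin (index_enum 'I_T) (fun t : 'I_T => sgp_Q_integrable t).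
have int_cst := integrable_cst_EFin Pr (3 * C ^+ 2 * X0 ^+ 2 / (1 - q) ^+ 2).
set k := 3 / 2 * (eta * C) ^+ 2 / (1 - q) ^+ 2.
have k0 : 0 <= k.
  by apply: divr_ge0; [apply: mulr_ge0 => //; exact: sqr_ge0 | exact: exprn_ge0 (ltW q1')].
rewrite -Rintegral_sum => [|t]; last exact: sgp_dev_integrable.
rewrite -(Rintegral_sum _ (fun t : 'I_T => sgp_Q_integrable t)) -RintegralZl //.
rewrite -[X in _ <= X + _](Rintegral_cst_prob Pr) -RintegralD //; last exact: integrableZl_EFin.
apply: le_Rintegral_ae (sgp_sum_dev_le_ae T i) => [|||om].
- by apply: integrable_sum_EFin => t; exact: sgp_dev_integrable.
- exact/integrableD_EFin/integrableZl_EFin.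
- by move=> om; apply: sumr_ge0 => t _; exact: dotv_ge0.
- apply: addr_ge0; last by apply: mulr_ge0; [exact: k0 | apply: sumr_ge0 => t _; exact: sgp_Q_ge0].
  by apply: divr_ge0; [rewrite !mulr_ge0 ?sqr_ge0 | exact: exprn_ge0 (ltW q1')].
Qed.

Lemma sgp_consensus_bound T :
  ((1 - q) ^+ 2 - 9 * (eta * C) ^+ 2 * L ^+ 2 * n%:R)
    * \sum_(t < T) (n%:R^-1 * \sum_(i < n) \int[Pr]_om dev t i om)
  <= 3 * C ^+ 2 * X0 ^+ 2 + 3 * (eta * C) ^+ 2 * n%:R * sigma ^+ 2 * T%:R
     + 9 * (eta * C) ^+ 2 * n%:R * zeta ^+ 2 * T%:R
     + 9 * (eta * C) ^+ 2 * \sum_(t < T) \int[Pr]_om gnorm t om.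
Proof.
have [q0 q1] := andP q_bounds.
have k2_gt0 : 0 < (1 - q) ^+ 2 by rewrite exprn_gt0 // subr_gt0.
have n_pos : 0 < n%:R :> R by rewrite ltr0n.
set k2 := (1 - q) ^+ 2 in k2_gt0 *; set a := (eta * C) ^+ 2.
set H := \sum_(t < T) \sum_(i < n) \int[Pr]_om dev t i om.
set G := \sum_(t < T) \int[Pr]_om gnorm t om.
have sumQ : \sum_(t < T) \int[Pr]_om Q t om <= 2 * (n%:R * sigma ^+ 2) * T%:R
    + 6 * L ^+ 2 * H + 6 * (n%:R * zeta ^+ 2) * T%:R + 6 * G.
  apply: le_trans (ler_sum _ (fun (t : 'I_T) _ => sgp_Rintegral_Q_le t)) _.
  by rewrite !big_split /= !sumr_const card_ord -!mulr_sumr !mulr_natr.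
have sum_nodes : H <= n%:R * (3 * C ^+ 2 * X0 ^+ 2 / k2
    + 3 / 2 * a / k2 * \sum_(t < T) \int[Pr]_om Q t om).
  rewrite /H exchange_big /= -[n in n%:R * _]card_ord mulr_natl -sumr_const.
  by apply: ler_sum => i _; exact: sgp_Rintegral_sum_dev_le.
have k_ge0 : 0 <= 3 / 2 * a / k2.
  by apply: divr_ge0; [apply: mulr_ge0 => //; exact: sqr_ge0 | exact: ltW].
have := le_trans sum_nodes (ler_wpM2l (ltW n_pos) (lerD (lexx _) (ler_wpM2l k_ge0 sumQ))).
rewrite -(ler_pM2l k2_gt0).
have -> : forall Y, k2 * (n%:R * (3 * C ^+ 2 * X0 ^+ 2 / k2 + 3 / 2 * a / k2 * Y))
    = n%:R * (3 * C ^+ 2 * X0 ^+ 2 + 3 / 2 * a * Y).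
  by move=> Y; field; rewrite gt_eqF.
move=> bound.
have -> : \sum_(t < T) (n%:R^-1 * \sum_(i < n) \int[Pr]_om dev t i om) = n%:R^-1 * H.
  by rewrite mulr_sumr.
rewrite -(ler_pM2l n_pos).
have -> : n%:R * ((k2 - 9 * a * L ^+ 2 * n%:R) * (n%:R^-1 * H))
    = (k2 - 9 * a * L ^+ 2 * n%:R) * H by field; rewrite gt_eqF.
lra.
Qed.

End SGPAnalysis.
Unset Implicit Arguments.
Theorem lemmaA7 (R : realType) (n d : nat) (Xi : Type)
  (dO : measure_display) (Omega : measurableType dO)
  (Pr : probability Omega R)
  (E : rel 'I_n) (W : nat -> 'M[R]_n)
  (f : 'I_n -> 'rV[R]_d -> R) (gradf : 'I_n -> 'rV[R]_d -> 'rV[R]_d)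
  (fstar : R)
  (g : 'I_n -> 'rV[R]_d -> Xi -> 'rV[R]_d)
  (xi : nat -> 'I_n -> Omega -> Xi)
  (eta L sigma zeta delta : R) (B Delta T : nat)
  (x0 : 'I_n -> 'rV[R]_d) :
  (1 < n)%N ->
  (* base topology: bidirected with self-loops *)
  (forall i j, E i j = E j i) -> (forall i, E i i) ->
  (* nonnegative column-stochastic mixing matrices supported on E *)
  (forall t i j, 0 <= W t i j) ->
  (forall t j, \sum_(i < n) W t i j = 1) ->
  (forall t i j, W t i j != 0 -> E j i) ->
  (* f = (1/n) sum_i f_i, f^* its finite optimal value *)
  let fav := fun x => n%:R^-1 * \sum_(i < n) f i x in
  let gradfav := fun x => n%:R^-1 *: \sum_(i < n) gradf i x in
  (forall x, fstar <= fav x) ->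
  (forall e, 0 < e -> exists x, fav x < fstar + e) ->
  (* Assumption (1): L-smoothness *)
  (forall i, L_smooth L (f i) (gradf i)) ->
  (* Assumption (2) (the minibatch used at step t by node i) *)
  (forall t i x,
     (\int[Pr]_om (enorm (g i x (xi t i om) - gradf i x) ^+ 2)%:E
       <= (sigma ^+ 2)%:E)%E) ->
  (* Assumption (2) with fresh minibatches, along the SGP trajectory *)
  (forall t i,
     (\int[Pr]_om (enorm (sgp_grad W g eta x0 xi t i om
                          - gradf i (sgp_z W g eta x0 xi t i om)) ^+ 2)%:E
       <= (sigma ^+ 2)%:E)%E) ->
  (* the stochastic gradients are random variables *)
  (forall t i k, measurable_fun setT
       (fun om => sgp_grad W g eta x0 xi t i om ord0 k)) ->
  (* Assumption (3) *)
  (forall x, n%:R^-1 * \sum_(i < n) enorm (gradf i x - gradfav x) ^+ 2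
             <= zeta ^+ 2) ->
  (* Assumption (4) *)
  (0 < B)%N -> (0 < Delta)%N ->
  (forall l, diam_le (window_rel W B l) Delta) ->
  (* delta = min over t of the positive entries of W^(t) *)
  0 < delta ->
  (forall t i j, 0 < W t i j -> delta <= W t i j) ->
  (forall e, 0 < e -> exists t i j, 0 < W t i j /\ W t i j < delta + e) ->
  let C := 4 / delta ^+ (Delta * B) in
  let q := powR (1 - delta ^+ (Delta * B)) ((Delta * B)%:R^-1) in
  let X0 := \big[Num.max/0]_(m < n) enorm (x0 m) in
  let xbar := sgp_xbar W g eta x0 xi in
  let z := sgp_z W g eta x0 xi in
  (* almost-sure consensus bound *)
  (forall t i, {ae Pr, forall om,
     enorm (xbar t om - z t i om)
       <= C * q ^+ t * X0
          + eta * C * \sum_(s < t.+1) q ^+ (t - s) *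
              \big[Num.max/0]_(j < n) enorm (sgp_grad W g eta x0 xi s j om)}) ->
  let Pc := 1 - 9 * eta ^+ 2 * C ^+ 2 * L ^+ 2 * n%:R / (1 - q) ^+ 2 in
  0 < Pc ->
  0 < eta -> eta <= L^-1 ->
  (0 < T)%N ->
  let Ex := fun F : Omega -> R => (\int[Pr]_om (F om)%:E)%E in
  let M := fun t => ((n%:R^-1)%:E *
       \sum_(i < n) Ex (fun om => (enorm (xbar t om - z t i om) ^+ 2)%R))%E in
  let xbar0 := n%:R^-1 *: \sum_(i < n) x0 i in
  ((eta / 2)%:E * (\sum_(t < T) Ex (fun om => (enorm (gradfav (xbar t om)) ^+ 2)%R))
   + ((eta - L * eta ^+ 2) / 2)%:E *
       (\sum_(t < T) Ex (fun om =>
           (enorm (n%:R^-1 *: \sum_(i < n) gradf i (z t i om)) ^+ 2)%R))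
   <= (fav xbar0 - fstar + L * eta ^+ 2 * sigma ^+ 2 / (2 * n%:R) * T%:R)%:E
      + (eta * L ^+ 2 / 2)%:E * (\sum_(t < T) M t))%E ->
  ((1 - 9 * eta ^+ 2 * L ^+ 2 * C ^+ 2 / (Pc * (1 - q) ^+ 2))%:E
     * (\sum_(t < T) Ex (fun om => (enorm (gradfav (xbar t om)) ^+ 2)%R))
   <= (2 * (fav xbar0 - fstar) / eta + L * eta * sigma ^+ 2 * T%:R / n%:R
       + 3 * L ^+ 2 * C ^+ 2 * X0 ^+ 2 / (Pc * (1 - q) ^+ 2)
       + 3 * eta ^+ 2 * L ^+ 2 * C ^+ 2 * n%:R * sigma ^+ 2 * T%:R
           / (Pc * (1 - q) ^+ 2)
       + 9 * eta ^+ 2 * L ^+ 2 * C ^+ 2 * n%:R * zeta ^+ 2 * T%:R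
           / (Pc * (1 - q) ^+ 2))%:E)%E.
Proof.
move=> n_gt1 _ _ W_ge0 W_col _ fav gradfav _ _ smooth _ grad_variance grad_measurable
  dissimilarity B_gt0 Delta_gt0 _ delta_gt0 delta_min _ C q X0 xbar z consensus
  Pc Pc_gt0 eta_gt0 eta_le _ Ex M xbar0 cumulative.
have n_gt0 : (0 < n)%N by exact: ltn_trans n_gt1.
have L_gt0 : 0 < L by rewrite -invr_gt0 (lt_le_trans eta_gt0 eta_le).
have L_eta : L * eta <= 1 by rewrite mulrC -ler_pdivlMr // mul1r.
have q_bounds : 0 <= q < 1.
  by apply: mixing_rate_bounds W_ge0 W_col delta_gt0 delta_min; rewrite ?muln_gt0 ?Delta_gt0.
have C_ge0 : 0 <= C by rewrite divr_ge0 // exprn_ge0 // ltW.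
have X0_ge0 : 0 <= X0 by exact: bigmax_ge_id.
have lip i := (smooth i).2.
have key := sgp_consensus_bound lip grad_measurable grad_variance dissimilarity n_gt0
  (ltW eta_gt0) C_ge0 X0_ge0 q_bounds consensus T.
have descent := sgp_descent_bound lip grad_measurable grad_variance eta_gt0 L_eta cumulative.
have q_lt1 : 0 < 1 - q by rewrite subr_gt0; case/andP: q_bounds.
have Pk_gt0 : 0 < Pc * (1 - q) ^+ 2 by rewrite mulr_gt0 ?exprn_gt0.
rewrite (_ : _ - _ = Pc * (1 - q) ^+ 2) in key; last by rewrite /Pc; field; rewrite gt_eqF.
rewrite (sgp_sum_gnorm_EFin lip grad_measurable grad_variance) -EFinM lee_fin.
rewrite (_ : 9 * eta ^+ 2 * L ^+ 2 * C ^+ 2 = L ^+ 2 * (9 * (eta * C) ^+ 2)); last by ring.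
apply: le_trans (le_of_coupled_bounds Pk_gt0 (sqr_ge0 L) key descent) _.
rewrite le_eqVlt; apply/predU1P; left.
by field; rewrite !gt_eqF // ltr0n.
Qed.
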